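(* Let $B_1,\dots,B_k$ be finite blocks (nonseparable graphs, i.e. connected graphs with no cut vertex), each of which admits an $\alpha$-labeling. Then the disjoint union $B_1\cup B_2\cup\dots\cup B_k$ is odd-graceful.
   Context: For a graph $G$ with $n$ edges, a graceful labeling is an injection $f:V(G)\to\{0,1,\dots,n\}$ such that the edge weights $|f(x)-f(y)|$, $xy\in E(G)$, are exactly $\{1,2,\dots,n\}$. An $\alpha$-labeling is a graceful labeling $f$ for which there is an integer $\lambda$ such that for every edge $xy$ either $f(x)\le\lambda<f(y)$ or $f(y)\le\lambda<f(x)$. A graph $G$ with $n$ edges is odd-graceful if there is an injective map $f:V(G)\to\{0,1,\dots,2n-1\}$ such that the set of edge weights $\{|f(x)-f(y)| : xy\in E(G)\}$ equals $\{1,3,\dots,2n-1\}$. *)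

(* Finite simple graphs = symmetric irreflexive boolean
   relations on a finType. *)
From mathcomp Require Import all_boot.
Set Implicit Arguments. Unset Strict Implicit. Unset Printing Implicit Defensive.

Definition absdiff (m n : nat) : nat := (m - n) + (n - m).

Section Graphs.
Variable V : finType.

Definition simple_graph (e : rel V) : Prop := symmetric e /\ irreflexive e.

Definition edges (e : rel V) : {set {set V}} :=
  [set [set x; y] | x in V, y in V & e x y].

Definition nedges (e : rel V) : nat := #|edges e|.

Definition gconnected (e : rel V) : Prop := forall x y : V, connect e x y.

Definition del_vertex (e : rel V) (v : V) : rel V :=
  [rel a b | [&& e a b, a != v & b != v]].

Definition cut_vertex (e : rel V) (v : V) : Prop :=
  exists x y : V, [/\ x != v, y != v & ~~ connect (del_vertex e v) x y].

Definition block (e : rel V) : Prop :=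
  [/\ simple_graph e, 2 <= #|V|, gconnected e & forall v, ~ cut_vertex e v].

Definition graceful_labeling (e : rel V) (f : V -> nat) : Prop :=
  let n := nedges e in
  [/\ injective f, forall x, f x <= n &
      forall w, (exists x y, e x y /\ absdiff (f x) (f y) = w) <-> (1 <= w <= n)].

Definition alpha_labeling (e : rel V) (f : V -> nat) : Prop :=
  graceful_labeling e f /\
  exists lam : nat, forall x y, e x y ->
     (f x <= lam < f y) \/ (f y <= lam < f x).

Definition has_alpha_labeling (e : rel V) : Prop :=
  exists f, alpha_labeling e f.

Definition odd_graceful_labeling (e : rel V) (f : V -> nat) : Prop :=
  let n := nedges e in
  [/\ injective f, forall x, f x < 2 * n &
      forall w, (exists x y, e x y /\ absdiff (f x) (f y) = w) <-> (odd w && (w < 2 * n))].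

Definition odd_graceful (e : rel V) : Prop := exists f, odd_graceful_labeling e f.

End Graphs.

Definition disj_union (k : nat) (T : 'I_k -> finType) (g : forall i, rel (T i))
  : rel {i : 'I_k & T i} :=
  fun u v => (tag u == tag v) && g (tag u) (tagged u) (tagged_as u v).

From mathcomp Require Import all_boot zify.
Set Implicit Arguments. Unset Strict Implicit. Unset Printing Implicit Defensive.

(* Let block i have n_i edges and an alpha-labeling f_i with threshold lam_i,
   let M_i be the number of edges of the blocks before i and
   s_i = sum_{j > i} (2 lam_j + 1).  Relabel a vertex of block i with
   f_i-label a by s_i + 2a if a <= lam_i and by s_i + 2 M_i + 2a - 1 otherwise.
   An edge of weight d in block i then gets the odd weight 2 M_i + 2d - 1, so
   block i realises exactly the odd weights in (2 M_i, 2 M_{i+1}).  The low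
   sides of the blocks occupy disjoint intervals stacked downwards as i grows,
   and every high side lies above all labels of the earlier blocks, so the new
   labeling is injective. *)


Section OddLabels.
Variables (k : nat) (n lam : nat -> nat).

Definition edge_offset i := \sum_(0 <= j < i) n j.
Definition low_offset i := \sum_(i.+1 <= j < k) (2 * lam j + 1).
Definition block_top i := low_offset i + 2 * edge_offset i.+1.

Definition odd_label i a :=
  if a <= lam i then low_offset i + 2 * a
  else low_offset i + 2 * edge_offset i + 2 * a - 1.

Lemma edge_offsetS i : edge_offset i.+1 = edge_offset i + n i.
Proof. by rewrite /edge_offset big_nat_recr. Qed.

Lemma low_offsetS i : i.+1 < k -> low_offset i = 2 * lam i.+1 + 1 + low_offset i.+1.
Proof. by move=> lt_ik; rewrite /low_offset big_ltn. Qed.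

Lemma low_offset_last i : k <= i.+1 -> low_offset i = 0.
Proof. by move=> le_ki; rewrite /low_offset big_geq. Qed.

Lemma edge_offset_homo : {homo edge_offset : i j / i <= j}.
Proof.
by apply: homo_leq => // [y x z|i]; [exact: leq_trans | rewrite edge_offsetS leq_addr].
Qed.

Lemma low_offset_homo : {homo low_offset : i j / i <= j >-> j <= i}.
Proof.
apply: (homo_leq (r := fun a b => b <= a)) => // [y x z le_yx le_zy|i].
  exact: leq_trans le_zy le_yx.
have [lt_ik|le_ki] := ltnP i.+1 k; first by rewrite (low_offsetS lt_ik) leq_addl.
by rewrite (low_offset_last (leq_trans le_ki _)).
Qed.

Lemma edge_offset_locate m : m < edge_offset k ->
  exists2 i, i < k & edge_offset i <= m < edge_offset i.+1.
Proof.
elim: k => [|j IHj]; first by rewrite /edge_offset big_geq.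
have [lt_mj _ | le_jm lt_mj1] := ltnP m (edge_offset j).
  by have [i lt_ij] := IHj lt_mj; exists i => //; apply: ltnW.
by exists j; rewrite ?le_jm.
Qed.

Lemma odd_label_inj i : injective (odd_label i).
Proof.
move=> a b; rewrite /odd_label.
by case: (leqP a (lam i)) => ha; case: (leqP b (lam i)) => hb; lia.
Qed.

Lemma odd_label_absdiff i a b : (a <= lam i < b) || (b <= lam i < a) ->
  absdiff (odd_label i a) (odd_label i b) = 2 * edge_offset i + 2 * absdiff a b - 1.
Proof.
rewrite /odd_label /absdiff.
by case: (leqP a (lam i)); case: (leqP b (lam i)) => //= *; lia.
Qed.

Lemma odd_edge_weightP w :
  odd w && (w < 2 * edge_offset k) <->
  exists2 i, i < k & exists2 d, 0 < d <= n i & w = 2 * edge_offset i + 2 * d - 1.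
Proof.
split=> [/andP [odd_w lt_w] | [i lt_ik [d /andP [d_gt0 le_dn] ->]]].
  have w_half : w = (w./2).*2.+1 by rewrite -[LHS]odd_double_half odd_w.
  have [|i lt_ik /andP [le_Mi lt_Mi1]] := @edge_offset_locate w./2; first lia.
  exists i => //; exists (w./2 - edge_offset i).+1; rewrite edge_offsetS in lt_Mi1; lia.
have le_Mi1 := @edge_offset_homo i.+1 k lt_ik.
rewrite edge_offsetS in le_Mi1.
have -> : 2 * edge_offset i + 2 * d - 1 = (edge_offset i + d.-1).*2.+1 by lia.
by rewrite /= odd_double /=; lia.
Qed.

Hypothesis lam_lt_n : forall i, i < k -> lam i < n i.

Lemma block_top_homo : {homo block_top : i j / i <= j}.
Proof.
apply: homo_leq => // [y x z|i]; first exact: leq_trans.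
rewrite /block_top (edge_offsetS i.+1).
have [lt_ik|le_ki] := ltnP i.+1 k.
  by rewrite (low_offsetS lt_ik); have := lam_lt_n lt_ik; lia.
rewrite (low_offset_last le_ki) low_offset_last; lia.
Qed.

Lemma odd_label_ge i a : low_offset i <= odd_label i a.
Proof. by rewrite /odd_label; case: (leqP a (lam i)); lia. Qed.

Lemma odd_label_lt i a : i < k -> a <= n i -> odd_label i a < block_top i.
Proof.
move=> lt_ik le_an; rewrite /odd_label /block_top edge_offsetS.
by have := lam_lt_n lt_ik; case: (leqP a (lam i)); lia.
Qed.

Lemma odd_label_lt_total i a : i < k -> a <= n i -> odd_label i a < 2 * edge_offset k.
Proof.
move=> lt_ik le_an; apply: leq_trans (odd_label_lt lt_ik le_an) _.
have k_gt0 : 0 < k by apply: leq_ltn_trans lt_ik.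
have le_top : block_top i <= block_top k.-1 by apply: block_top_homo; rewrite -ltnS prednK.
by rewrite /block_top prednK // (low_offset_last (i := k.-1)) ?prednK in le_top.
Qed.

(* Block [j] is placed below block [i < j] on its low side and above it on its
   high side; the high side clears block [i] because [2 lam l + 1 < 2 n l]. *)
Lemma odd_label_neq i j a b : i < j < k -> a <= n i -> odd_label i a != odd_label j b.
Proof.
case/andP=> lt_ij lt_jk le_an.
have j_eq : j.-1.+1 = j by rewrite prednK // (leq_ltn_trans _ lt_ij).
have low_j := low_offsetS (i := j.-1); rewrite j_eq in low_j.
have le_low : low_offset j.-1 <= low_offset i by apply: low_offset_homo; rewrite -ltnS j_eq.
have le_top : block_top i <= block_top j.-1 by apply: block_top_homo; rewrite -ltnS j_eq.
move: le_top; rewrite /block_top j_eq (low_j lt_jk) => le_top.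
have := odd_label_lt (ltn_trans lt_ij lt_jk) le_an; have := odd_label_ge i a.
rewrite /block_top /odd_label; case: (leqP b (lam j)); lia.
Qed.

End OddLabels.

Section AlphaLabelings.
Variable V : finType.

Definition alpha_threshold (e : rel V) (f : V -> nat) (lam : nat) : Prop :=
  forall x y, e x y -> (f x <= lam < f y) || (f y <= lam < f x).

Lemma graceful_nedges_gt0 (e : rel V) (f : V -> nat) :
  graceful_labeling e f -> 1 < #|V| -> 0 < nedges e.
Proof.
case=> f_inj f_le _ /card_gt1P [x [y [_ _ neq_xy]]].
have neq_f : f x <> f y by move/f_inj=> eq_xy; rewrite eq_xy eqxx in neq_xy.
by have := f_le x; have := f_le y; lia.
Qed.

Lemma graceful_has_edge (e : rel V) (f : V -> nat) :
  graceful_labeling e f -> 0 < nedges e -> exists x y, e x y.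
Proof.
by case=> _ _ weights n_gt0; have [x [y [exy _]]] := proj2 (weights 1) n_gt0; exists x, y.
Qed.

Lemma alpha_threshold_lt (e : rel V) (f : V -> nat) lam x y :
  graceful_labeling e f -> alpha_threshold e f lam -> e x y -> lam < nedges e.
Proof.
case=> _ f_le _ thr exy; have := f_le x; have := f_le y.
by case/orP: (thr x y exy) => /andP [_ lt_lam]; lia.
Qed.

Lemma block_alpha_labeling (e : rel V) : block e -> has_alpha_labeling e ->
  exists fl : (V -> nat) * nat,
    [/\ graceful_labeling e fl.1, alpha_threshold e fl.1 fl.2 & fl.2 < nedges e].
Proof.
case=> _ card_V _ _ [f [graceful_f [lam thr]]].
have [x [y exy]] := graceful_has_edge graceful_f (graceful_nedges_gt0 graceful_f card_V).
have thr' : alpha_threshold e f lam by move=> a b /thr [] ->; rewrite ?orbT.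
by exists (f, lam); split; last exact: alpha_threshold_lt graceful_f thr' exy.
Qed.

End AlphaLabelings.

Unset Implicit Arguments.

Section DisjointUnion.
Variables (k : nat) (T : 'I_k -> finType) (g : forall i, rel (T i)).

Lemma disj_union_tagged i (x y : T i) : disj_union g (Tagged T x) (Tagged T y) = g i x y.
Proof. by rewrite /disj_union /= eqxx tagged_asE. Qed.

Lemma disj_union_edge u v : disj_union g u v ->
  exists i (x y : T i), [/\ u = Tagged T x, v = Tagged T y & g i x y].
Proof.
case: u v => [i x] [j y]; rewrite /disj_union /= => /andP [/eqP eq_ij].
by subst j; rewrite tagged_asE; exists i, x, y.
Qed.

Lemma nedges_disj_union : nedges (disj_union g) = \sum_(i < k) nedges (g i).
Proof.
pose lift i (A : {set T i}) := Tagged T @: A.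
have lift2 i (x y : T i) : lift i [set x; y] = [set Tagged T x; Tagged T y].
  by rewrite /lift imsetU1 imset_set1.
rewrite /nedges.
have -> : edges (disj_union g) = \bigcup_i [set lift i A | A in edges (g i)].
  apply/setP => B; apply/imset2P/bigcupP => [[u v _] | [i _ /imsetP [A]]].
    rewrite inE => /disj_union_edge [i [x [y [-> -> gxy]]]] ->.
    exists i => //; apply/imsetP; exists [set x; y]; rewrite ?lift2 //.
    by apply/imset2P; exists x y; rewrite ?inE.
  case/imset2P => x y _; rewrite inE => gxy -> ->.
  by exists (Tagged T x) (Tagged T y); rewrite ?inE ?disj_union_tagged ?lift2.
rewrite -sum1_card partition_disjoint_bigcup => [|i j neq_ij].
  apply: eq_bigr => i _; rewrite sum1_card card_imset //.
  by apply: imset_inj => x y /eqP; rewrite eq_Tagged => /eqP.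
rewrite -setI_eq0; apply/eqP/setP => B; rewrite !inE.
apply/negbTE/negP => /andP [/imsetP [A /imset2P [x y _ _ ->] ->] /imsetP [A' _ eqB]].
have /imsetP [z _ /(congr1 tag) /= eq_ij] : Tagged T x \in lift j A'.
  by rewrite -eqB lift2 !inE eqxx.
by rewrite eq_ij eqxx in neq_ij.
Qed.

End DisjointUnion.

Definition ord_ext {k} (f : 'I_k -> nat) (j : nat) : nat := oapp f 0 (insub j).

Lemma ord_extE {k} (f : 'I_k -> nat) (i : 'I_k) : ord_ext f i = f i.
Proof. by rewrite /ord_ext valK. Qed.

Section UnionLabeling.
Variables (k : nat) (T : 'I_k -> finType) (g : forall i, rel (T i)).
Variables (F : forall i, T i -> nat) (lam : 'I_k -> nat).
Hypothesis graceful_F : forall i, graceful_labeling (g i) (F i).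
Hypothesis threshold_F : forall i, alpha_threshold (g i) (F i) (lam i).
Hypothesis lam_lt : forall i, lam i < nedges (g i).

Let n := ord_ext (fun i => nedges (g i)).

Definition union_label (u : {i : 'I_k & T i}) : nat :=
  odd_label k n (ord_ext lam) (tag u) (F (tag u) (tagged u)).

Let ext_lam_lt j : j < k -> ord_ext lam j < n j.
Proof. by move=> lt_jk; rewrite /n -[j]/(val (Ordinal lt_jk)) !ord_extE; apply: lam_lt. Qed.

Let F_le {i} (x : T i) : F i x <= n i.
Proof. by rewrite /n ord_extE; case: (graceful_F i) => _ F_le _; apply: F_le. Qed.

Let edge_offset_k : edge_offset n k = nedges (disj_union g).
Proof.
by rewrite nedges_disj_union /edge_offset big_mkord; apply: eq_bigr => i _; rewrite /n ord_extE.
Qed.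

Lemma union_label_inj : injective union_label.
Proof.
move=> [i x] [j y]; rewrite /union_label /= => eq_label.
have [lt_ij|lt_ji|/val_inj eq_ij] := ltngtP i j.
- have ordered : i < j < k by rewrite lt_ij ltn_ord.
  by move: (odd_label_neq ext_lam_lt (F j y) ordered (F_le x)); rewrite eq_label eqxx.
- have ordered : j < i < k by rewrite lt_ji ltn_ord.
  by move: (odd_label_neq ext_lam_lt (F i x) ordered (F_le y)); rewrite eq_label eqxx.
subst j; have [F_inj _ _] := graceful_F i.
by rewrite (F_inj _ _ (odd_label_inj eq_label)).
Qed.

Lemma union_label_lt u : union_label u < 2 * nedges (disj_union g).
Proof.
by case: u => i x; rewrite -edge_offset_k; apply: odd_label_lt_total ext_lam_lt _ _ _ (F_le x).
Qed.

Lemma union_label_absdiff i (x y : T i) : g i x y ->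
  absdiff (union_label (Tagged T x)) (union_label (Tagged T y)) =
  2 * edge_offset n i + 2 * absdiff (F i x) (F i y) - 1.
Proof. by move/threshold_F=> thr; apply: odd_label_absdiff; rewrite ord_extE. Qed.

Lemma union_label_odd_graceful : odd_graceful_labeling (disj_union g) union_label.
Proof.
split=> [||w]; [exact: union_label_inj | exact: union_label_lt |].
rewrite -edge_offset_k odd_edge_weightP; split.
  case=> u [v [/disj_union_edge [i [x [y [-> -> gxy]]]] <-]].
  have [_ _ weights] := graceful_F i.
  have /andP [d_gt0 le_dn] : 1 <= absdiff (F i x) (F i y) <= nedges (g i).
    by apply/weights; exists x, y.
  exists i => //; exists (absdiff (F i x) (F i y)); last exact: union_label_absdiff.
  by rewrite d_gt0 /n ord_extE.
case=> j lt_jk [d /andP [d_gt0 le_dn] ->].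
pose i := Ordinal lt_jk; have [_ _ weights] := graceful_F i.
have [|x [y [gxy eq_d]]] := proj2 (weights d).
  by move: le_dn; rewrite d_gt0 /n -[j]/(val i) ord_extE.
by exists (Tagged T x), (Tagged T y); rewrite disj_union_tagged union_label_absdiff // eq_d.
Qed.

End UnionLabeling.

Theorem theorem3 (k : nat) (T : 'I_k -> finType) (g : forall i, rel (T i)) :
  (forall i, block (g i)) ->
  (forall i, has_alpha_labeling (g i)) ->
  odd_graceful (disj_union g).
Proof.
move=> blocks alphas.
have [Flam labeled] := fin_all_exists (fun i => block_alpha_labeling (blocks i) (alphas i)).
exists (union_label k T g (fun i => (Flam i).1) (fun i => (Flam i).2)).
by apply: union_label_odd_graceful => i; case: (labeled i).
Qed.
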